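(* Let $G$ be a word-representable graph. Then for all $n\ge 3$, $l(G \,\square\, K_n) \le n\,l(G) + (n^2-1)|G|$.
   Context: All graphs are simple and undirected; $|G|$ denotes the number of vertices of $G$ and $K_n$ is the complete graph on $n$ vertices. Letters $x,y$ alternate in a word $w$ if deleting all other letters from $w$ yields $xyxy\ldots$ or $yxyx\ldots$ (of either parity). A word $w$ over $V(G)$ represents $G$ if every vertex occurs in $w$ and for all distinct $x,y$, $xy\in E(G)$ iff $x,y$ alternate in $w$; $G$ is word-representable if such a word exists, and $l(G)$ is the minimum length of a word representing $G$. The Cartesian product $G\,\square\,H$ has vertex set $V(G)\times V(H)$, with $(u,v)$ adjacent to $(u',v')$ iff either $u=u'$ and $vv'\in E(H)$, or $v=v'$ and $uu'\in E(G)$. *)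

From mathcomp Require Import all_boot.
From Stdlib Require Import ClassicalEpsilon.
Set Implicit Arguments. Unset Strict Implicit. Unset Printing Implicit Defensive.

Definition simple_graph (V : finType) (e : rel V) : Prop :=
  symmetric e /\ irreflexive e.

(* x and y alternate in w: deleting all other letters gives xyxy... or yxyx...
   i.e. the restriction of w to {x,y} has no two consecutive equal letters. *)
Definition alternate (V : eqType) (w : seq V) (x y : V) : bool :=
  sorted (fun a b => a != b) [seq z <- w | (z == x) || (z == y)].

Definition represents (V : finType) (e : rel V) (w : seq V) : bool :=
  [forall v : V, v \in w] &&
  [forall x : V, forall y : V, (x != y) ==> (e x y == alternate w x y)].

Definition word_representable (V : finType) (e : rel V) : Prop :=
  exists w : seq V, represents e w.

Definition rep_of_len (V : finType) (e : rel V) (k : nat) : bool :=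
  [exists t : k.-tuple V, represents e t].

(* l(G): minimum length of a word representing G (0 by convention if G is
   not word-representable; it is only used for word-representable graphs). *)
Definition lmin (V : finType) (e : rel V) : nat :=
  match excluded_middle_informative (exists k, rep_of_len e k) with
  | left h => ex_minn h
  | right _ => 0
  end.

Definition complete_rel (n : nat) : rel 'I_n := fun i j => i != j.

Definition cart_prod (U W : finType) (eG : rel U) (eH : rel W) : rel (U * W) :=
  fun p q => ((p.1 == q.1) && eH p.2 q.2) || ((p.2 == q.2) && eG p.1 q.1).

From mathcomp Require Import all_boot zify.
From Stdlib Require Import ClassicalEpsilon.
Set Implicit Arguments. Unset Strict Implicit. Unset Printing Implicit Defensive.

(* Let w be a shortest word for G, S the vertices of G in order of first
   occurrence in w, and E = c_0 ... c_(n-1) the vertices of K_n.  Writing s x R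
   for the word in which every letter z of s is replaced by (z,r), r in R, take
   the n-1 rounds (S x rot_k E)(S x c_k), k < n-1, followed by w x rot_(n-1) E;
   its length is (n^2-1)|S| + n l(G).  Restricted to two copies (x,a), (x,b) of
   one vertex, the rounds telescope into a prefix of a power of E, so the copies
   alternate.  For x <> y with x first in w, restricted to X = (x,a), Y = (y,b)
   each round reads XY followed by X if c_k = a and by Y if c_k = b, and the
   tail is w restricted to {x,y}, read with x -> X, y -> Y.  Every round is
   followed by an X, so X and Y alternate iff no c_k with k < n-1 equals exactly
   one of a, b -- that is, iff a = b -- and x, y alternate in w. *)

Local Notation nostutter s := (sorted (fun u v => u != v) s).

Section Alternation.

Variable T : eqType.
Implicit Types (s w : seq T) (x y X Y : T).

Lemma alternateE w x y : alternate w x y = nostutter (filter (pred2 x y) w).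
Proof. by []. Qed.

Lemma alternateC w x y : alternate w x y = alternate w y x.
Proof. by rewrite !alternateE; congr sorted; apply: eq_filter => z /=; rewrite orbC. Qed.

Lemma nostutter_map_in (T' : eqType) (f : T -> T') s :
  {in s &, injective f} -> nostutter (map f s) = nostutter s.
Proof.
move=> f_inj; apply: (mono_sorted_in (P := mem s)) (allss s) => u v u_s v_s /=.
by rewrite (inj_in_eq f_inj).
Qed.

Lemma nostutter_flatten_nseq2 x y m :
  x != y -> nostutter (flatten (nseq m [:: x; y])).
Proof.
move=> nxy; elim: m => [|[|m] IH] /=; rewrite ?nxy //.
by move: IH => /= /andP [_ ->]; rewrite eq_sym nxy.
Qed.

Lemma nostutter_round X Y (p q : bool) t : X != Y ->
  nostutter ([:: X, Y & nseq p X ++ nseq q Y] ++ X :: t) =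
  (p == q) && nostutter (X :: t).
Proof. by move=> nXY; case: p; case: q; rewrite /= ?eqxx ?nXY ?(eq_sym Y) ?nXY. Qed.

Lemma nostutter_rounds (I : Type) X Y (p q : I -> bool) ks t :
  X != Y ->
  nostutter (flatten [seq [:: X, Y & nseq (p k) X ++ nseq (q k) Y] | k <- ks] ++ X :: t) =
  all (fun k => p k == q k) ks && nostutter (X :: t).
Proof.
move=> nXY; elim: ks => [|k ks IH] //; rewrite map_cons [flatten _]/= -(catA [:: X, Y & _]).
set rest := flatten _ ++ _ in IH *.
have [t' Et'] : exists t', rest = X :: t' by rewrite /rest; case: ks {IH rest} => /=; eexists.
by rewrite Et' nostutter_round // -Et' IH andbA.
Qed.

Lemma nostutter_filter_flatten_nseq (E : seq T) a b N :
  uniq E -> a \in E -> b \in E -> a != b ->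
  nostutter (filter (pred2 a b) (flatten (nseq N E))).
Proof.
move=> E_uniq aE bE nab; rewrite filter_flatten map_nseq.
have : perm_eq (filter (pred2 a b) E) [:: a; b].
  apply: uniq_perm; rewrite ?filter_uniq //= ?inE ?nab // => z.
  by rewrite mem_filter !inE andb_idr // => /pred2P [] ->.
case: (filter _ _) => [|u [|v [|? ?]]] abP; have := perm_size abP => //= _.
apply: nostutter_flatten_nseq2.
by move: (perm_uniq abP); rewrite /= !inE nab !andbT => ->.
Qed.

End Alternation.

Lemma take_cat_rot_nth (T : Type) (x0 : T) (E : seq T) k m : k + m <= size E ->
  take k E ++ flatten [seq rot i E ++ [:: nth x0 E i] | i <- iota k m] =
  flatten (nseq m E) ++ take (k + m) E.
Proof.
elim: m k => [|m IH] k le_E /=; first by rewrite addn0 cats0.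
rewrite -[rot k E]/(drop k E ++ take k E) -!catA catA cat_take_drop.
rewrite (catA (take k E) [:: _]) cats1 -take_nth; last by lia.
by rewrite IH -?catA ?addSnnS //; lia.
Qed.

Lemma cat_flatten_nseq_swap (T : Type) (s t : seq T) c :
  s ++ flatten (nseq c (t ++ s)) = flatten (nseq c (s ++ t)) ++ s.
Proof. by elim: c => [|c IH] /=; rewrite ?cats0 // -!catA IH. Qed.

Lemma flatten_rot_nth (T : Type) (x0 : T) (E : seq T) m c : m <= size E ->
  flatten [seq rot k E ++ [:: nth x0 E k] | k <- iota 0 m] ++
  flatten (nseq c (rot m E)) ++ drop m E = flatten (nseq (m + c).+1 E).
Proof.
move=> le_mE; have := @take_cat_rot_nth _ x0 E 0 m; rewrite take0 add0n cat0s => -> //.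
rewrite -catA (catA (take m E)) /rot cat_flatten_nseq_swap -catA cat_take_drop.
by rewrite -addn1 !nseqD !flatten_cat /= cats0 catA.
Qed.

Lemma iota_nth_separates (T : eqType) (x0 : T) (E : seq T) a b :
  a \in E -> b \in E ->
  all (fun k => (nth x0 E k == a) == (nth x0 E k == b)) (iota 0 (size E).-1) = (a == b).
Proof.
move=> aE bE; case: eqVneq => [<-|nab]; first by apply/allP => k _; rewrite eqxx.
have nidx : index a E != index b E.
  by apply: contra nab => /eqP/(congr1 (nth x0 E)); rewrite !nth_index // => ->.
apply/negbTE/allPn; exists (minn (index a E) (index b E)).
  by rewrite mem_iota; move: nidx (index_mem a E) (index_mem b E); rewrite aE bE; lia.
rewrite /minn; case: ltnP => _; rewrite nth_index // eqxx ?(eq_sym b) ?nab //.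
by rewrite eq_sym nab.
Qed.

Definition first_occurrences (T : eqType) (w : seq T) : seq T := rev (undup (rev w)).

Section FirstOccurrences.

Variable T : eqType.
Implicit Types (w : seq T) (x y : T).

Lemma first_occurrences_uniq w : uniq (first_occurrences w).
Proof. by rewrite rev_uniq undup_uniq. Qed.

Lemma mem_first_occurrences w : first_occurrences w =i w.
Proof. by move=> x; rewrite mem_rev mem_undup mem_rev. Qed.

Lemma filter_first_occurrences (p : pred T) w :
  filter p (first_occurrences w) = first_occurrences (filter p w).
Proof. by rewrite filter_rev filter_undup filter_rev. Qed.

Lemma first_occurrences_cons x w :
  first_occurrences (x :: w) = x :: filter (predC1 x) (first_occurrences w).
Proof. by rewrite /first_occurrences rev_cons undup_rcons rev_rcons filter_rev. Qed.

Lemma first_occurrences_pred2 w x y l :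
  x != y -> y \in w -> filter (pred2 x y) w = x :: l ->
  filter (pred2 x y) (first_occurrences w) = [:: x; y].
Proof.
move=> nxy yw wxy; rewrite filter_first_occurrences wxy first_occurrences_cons.
congr (_ :: _); apply: perm_small_eq => //.
have : y \in filter (pred2 x y) w by rewrite mem_filter /= eqxx orbT.
rewrite wxy inE eq_sym (negbTE nxy) /= => yl.
apply: uniq_perm; rewrite ?filter_uniq ?first_occurrences_uniq // => z.
rewrite mem_filter mem_first_occurrences inE.
apply/andP/eqP => [[nzx zl]|->] /=; last by rewrite eq_sym nxy.
have : z \in filter (pred2 x y) w by rewrite wxy inE zl orbT.
by rewrite mem_filter => /andP [/pred2P [zx|] _] //; move: nzx; rewrite /= zx eqxx.
Qed.

End FirstOccurrences.

Section AllpairsFilter.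

Variables (V T : eqType).
Implicit Types (s : seq V) (R : seq T).

Lemma filter_allpairs_fibre s R x a b :
  filter (pred2 (x, a) (x, b)) [seq (z, r) | z <- s, r <- R] =
  [seq (x, r) | r <- filter (pred2 a b) (flatten (nseq (count_mem x s) R))].
Proof.
elim: s => // z s IH; rewrite allpairs_cons filter_cat IH filter_map.
have [->|nzx] := eqVneq z x; rewrite /= ?eqxx ?add1n /=.
  rewrite filter_cat map_cat; congr (map _ _ ++ _).
  by apply: eq_filter => r /=; rewrite !xpair_eqE eqxx.
rewrite (negbTE nzx) (@eq_filter _ _ pred0) ?filter_pred0 // => r /=.
by rewrite !xpair_eqE (negbTE nzx).
Qed.

Lemma filter_allpairs_cross s R x y a b : x != y ->
  filter (pred2 (x, a) (y, b)) [seq (z, r) | z <- s, r <- R] =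
  flatten [seq if z == x then [seq (x, r) | r <- filter (pred1 a) R]
               else [seq (y, r) | r <- filter (pred1 b) R] | z <- filter (pred2 x y) s].
Proof.
move=> nxy; elim: s => // z s IH; rewrite allpairs_cons filter_cat IH filter_map.
have [->|nzx] := eqVneq z x; rewrite /= ?eqxx /= ?eqxx.
  congr (_ ++ _); congr map; apply: eq_filter => r /=.
  by rewrite !xpair_eqE eqxx (negbTE nxy) orbF.
have [zy|nzy] := eqVneq z y; first subst z; rewrite /= ?eqxx ?orbT /= ?(negbTE nzx).
  congr (_ ++ _); congr map; apply: eq_filter => r /=.
  by rewrite !xpair_eqE eqxx eq_sym (negbTE nxy).
rewrite (@eq_filter _ _ pred0) ?filter_pred0 // => r /=.
by rewrite !xpair_eqE (negbTE nzx) (negbTE nzy).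
Qed.

End AllpairsFilter.

Section ProductWord.

Variables (V T : eqType) (c0 : T) (E : seq T).
Hypothesis E_uniq : uniq E.

Definition round (S : seq V) (k : nat) : seq (V * T) :=
  [seq (z, r) | z <- S, r <- rot k E] ++ [seq (z, nth c0 E k) | z <- S].

Definition prod_word (w : seq V) : seq (V * T) :=
  flatten [seq round (first_occurrences w) k | k <- iota 0 (size E).-1] ++
  [seq (z, r) | z <- w, r <- rot (size E).-1 E].

Lemma size_prod_word w :
  size (prod_word w) =
  (size E).-1 * (size (first_occurrences w) * (size E).+1) + size w * size E.
Proof.
have size_round k : size (round (first_occurrences w) k) =
                    size (first_occurrences w) * (size E).+1.
  by rewrite size_cat size_allpairs size_map size_rot mulnS addnC.
rewrite size_cat size_allpairs size_rot -[in RHS](size_iota 0 (size E).-1); congr (_ + _).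
by elim: (iota 0 _) => //= k ks IH; rewrite size_cat IH size_round.
Qed.

Lemma alternate_prod_word_fibre w x a b :
  x \in w -> a \in E -> b \in E -> a != b -> alternate (prod_word w) (x, a) (x, b).
Proof.
move=> xw aE bE nab; set S := first_occurrences w; set m := (size E).-1.
have S_x : count_mem x S = 1.
  by rewrite count_uniq_mem ?first_occurrences_uniq // mem_first_occurrences xw.
have fibre R : filter (pred2 (x, a) (x, b)) [seq (z, r) | z <- S, r <- R] =
               [seq (x, r) | r <- filter (pred2 a b) R].
  by rewrite filter_allpairs_fibre S_x /= cats0.
have rounds ks : filter (pred2 (x, a) (x, b)) (flatten [seq round S k | k <- ks]) =
    [seq (x, r) | r <- filter (pred2 a b) (flatten [seq rot k E ++ [:: nth c0 E k] | k <- ks])].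
  rewrite !filter_flatten map_flatten -!map_comp; congr flatten; apply: eq_map => k /=.
  rewrite /round filter_cat fibre -(allpairs1r _ S (fun=> nth c0 E k)) fibre.
  by rewrite filter_cat map_cat.
rewrite alternateE /prod_word filter_cat rounds filter_allpairs_fibre -map_cat -filter_cat.
rewrite nostutter_map_in; last by move=> u v _ _ [].
have := nostutter_filter_flatten_nseq (m + count_mem x w).+1 E_uniq aE bE nab.
by rewrite -(flatten_rot_nth c0) ?leq_pred // catA filter_cat => /cat_sorted2 [].
Qed.

Lemma alternate_prod_word_cross w x y l a b :
  x != y -> y \in w -> a \in E -> b \in E -> filter (pred2 x y) w = x :: l ->
  alternate (prod_word w) (x, a) (y, b) = (a == b) && alternate w x y.
Proof.
move=> nxy yw aE bE wxy; set X := (x, a); set Y := (y, b).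
have nXY : X != Y by rewrite xpair_eqE negb_and nxy.
have S_xy := first_occurrences_pred2 nxy yw wxy.
have pick k c : c \in E -> filter (pred1 c) (rot k E) = [:: c].
  by move=> cE; rewrite filter_pred1_uniq ?rot_uniq ?mem_rot.
have round_XY k : filter (pred2 X Y) (round (first_occurrences w) k) =
    [:: X, Y & nseq (nth c0 E k == a) X ++ nseq (nth c0 E k == b) Y].
  rewrite /round filter_cat -(allpairs1r _ _ (fun=> nth c0 E k)).
  rewrite !filter_allpairs_cross // S_xy /= eqxx (eq_sym y) (negbTE nxy) !pick //=.
  by rewrite /X /Y cats0; case: eqP => [->|_]; case: eqP => [->|_].
set h := fun z => if z == x then X else Y.
have last_XY : filter (pred2 X Y) [seq (z, r) | z <- w, r <- rot (size E).-1 E] =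
               map h (x :: l).
  rewrite filter_allpairs_cross // wxy !pick // -[RHS]flatten_map1; congr flatten.
  by apply: eq_map => z /=; rewrite /h; case: (z == x).
have h_inj : {in x :: l &, injective h}.
  move=> u v; rewrite -wxy !mem_filter => /andP [/pred2P [] -> _] /andP [/pred2P [] -> _] //;
  by rewrite /h eqxx ?(eq_sym y) (negbTE nxy) => /(congr1 fst).
rewrite alternateE /prod_word filter_cat filter_flatten -map_comp (eq_map round_XY).
have hx : h x = X by rewrite /h eqxx.
rewrite last_XY map_cons hx nostutter_rounds // iota_nth_separates //.
by rewrite -hx -map_cons nostutter_map_in // alternateE wxy.
Qed.

End ProductWord.

Lemma prod_word_represents (V T : finType) (c0 : T) (e : rel V) w :
  represents e w ->
  represents (cart_prod e (fun i j : T => i != j)) (prod_word c0 (enum T) w).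
Proof.
move=> /andP [/forallP w_all /forallP w_edge]; apply/andP; split.
  apply/forallP => -[z r]; rewrite mem_cat; apply/orP; right.
  by rewrite allpairs_f ?mem_rot ?mem_enum.
apply/forallP => -[x a]; apply/forallP => -[y b]; apply/implyP => neq_xa_yb; apply/eqP.
have E_uniq := enum_uniq T; have aE : a \in enum T by rewrite mem_enum.
have bE : b \in enum T by rewrite mem_enum.
rewrite /cart_prod /=; have [xy|nxy] := eqVneq x y; first subst y.
  have nab : a != b by move: neq_xa_yb; rewrite xpair_eqE eqxx.
  by rewrite /= nab alternate_prod_word_fibre.
rewrite /=; move/forallP/(_ y)/implyP/(_ nxy)/eqP: (w_edge x) => ->.
have : x \in filter (pred2 x y) w by rewrite mem_filter /= eqxx w_all.
case wxy: (filter (pred2 x y) w) => [|z l] // _.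
have : z \in filter (pred2 x y) w by rewrite wxy mem_head.
rewrite mem_filter => /andP [/pred2P [] zE _]; subst z.
  by rewrite (alternate_prod_word_cross c0 E_uniq nxy (w_all y) aE bE wxy).
have wyx : filter (pred2 y x) w = y :: l.
  by rewrite -wxy; apply: eq_filter => z /=; rewrite orbC.
have nyx : y != x by rewrite eq_sym.
rewrite [RHS]alternateC (alternate_prod_word_cross c0 E_uniq nyx (w_all x) bE aE wyx).
by rewrite eq_sym alternateC.
Qed.

Lemma lmin_le (V : finType) (e : rel V) w : represents e w -> lmin e <= size w.
Proof.
move=> w_rep; rewrite /lmin; case: excluded_middle_informative => // ex.
by case: ex_minnP => m _; apply; apply/existsP; exists (in_tuple w).
Qed.

Lemma lmin_witness (V : finType) (e : rel V) :
  word_representable e -> exists2 w, represents e w & size w = lmin e.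
Proof.
move=> [w0 w0_rep]; rewrite /lmin; case: excluded_middle_informative => [ex|[]]; last first.
  by exists (size w0); apply/existsP; exists (in_tuple w0).
by case: ex_minnP => m /existsP [t t_rep] _; exists t; rewrite ?size_tuple.
Qed.

Unset Implicit Arguments.

Theorem mainTheorem6 (V : finType) (e : rel V) :
  simple_graph e -> word_representable e ->
  forall n : nat, 3 <= n ->
    word_representable (cart_prod e (@complete_rel n)) /\
    lmin (cart_prod e (@complete_rel n)) <= n * lmin e + (n ^ 2 - 1) * #|V|.
Proof.
(* Any n >= 1 would do: [3 <= n] only supplies a default colour, and
   [simple_graph e] is not needed since [represents] constrains distinct pairs only. *)
move=> _ /lmin_witness [w w_rep w_min] n n_ge3.
have c0 : 'I_n := Ordinal (leq_trans (isT : 0 < 3) n_ge3).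
have W_rep := prod_word_represents c0 w_rep.
split; first by exists (prod_word c0 (enum 'I_n) w).
apply: leq_trans (lmin_le W_rep) _.
rewrite size_prod_word size_enum_ord w_min.
have : size (first_occurrences w) <= #|V|.
  by rewrite -(card_uniqP (first_occurrences_uniq w)) max_card.
case: n n_ge3 {c0 W_rep} => // n _; rewrite -[n.+1 ^ 2]/(n.+1 * n.+1) /=; nia.
Qed.
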